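(* Let $k\ge2$, let $A=\{a_1,\dots,a_n\}$ be a sorted multiset of positive integers ($a_1\le\dots\le a_n$), and let $\varepsilon\in(0,1)$. Let $c=1+\left\lceil\left(1+\frac1\varepsilon\right)\ln\frac{2(k-1)}{\varepsilon^2}\right\rceil$ and $C=(c+1)(k-1)$. Then $$\mathrm{OPT}(A)\le\min_{k\le j\le n}\mathrm{OPT_L}\bigl(A[j-C+1,j]\bigr)\le(1+\varepsilon)\,\mathrm{OPT}(A).$$
   Context: $[n]=\{1,\dots,n\}$; $\Sigma(S,A)=\sum_{i\in S}a_i$; for pairwise disjoint $S_1,\dots,S_k\subseteq[n]$, $\mathcal{R}(S_1,\dots,S_k,A)=\max_i\Sigma(S_i,A)/\min_i\Sigma(S_i,A)$ if the minimum is positive and $+\infty$ otherwise. $\mathrm{OPT}(A)$ is the minimum ratio over all $k$-tuples of pairwise disjoint subsets of the index set of $A$ (the $k$-SSR problem). $\mathrm{OPT_L}(A)$ is the minimum ratio over such $k$-tuples that additionally contain the largest index (i.e. the largest element of the sorted multiset must belong to some $S_i$; the $k$-SSR$_L$ problem). $A[l,r]$ denotes the sorted multiset consisting of the items $a_i$ with $l\le i\le r$ (so indices below $1$ are simply absent). *)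

From HB Require Import structures.
From mathcomp Require Import all_boot all_order all_algebra.
From mathcomp Require Import all_classical all_reals all_analysis.
Set Implicit Arguments. Unset Strict Implicit. Unset Printing Implicit Defensive.
Import Order.TTheory GRing.Theory Num.Theory.
Local Open Scope ring_scope.

(* A multiset A = {a_1 <= ... <= a_n} is a sequence A : seq nat; the item a_i
   (1-based) is nth 0 A (i-1), i.e. the 0-based index i-1 : 'I_(size A). *)

Definition Sig (A : seq nat) (S : {set 'I_(size A)}) : nat :=
  (\sum_(x in S) nth 0 A x)%N.

Definition pdisj (k : nat) (A : seq nat) (S : 'I_k -> {set 'I_(size A)}) : Prop :=
  forall i j : 'I_k, i != j -> [disjoint S i & S j].

Definition maxSig (k : nat) (A : seq nat) (S : 'I_k -> {set 'I_(size A)}) : nat :=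
  (\max_(i < k) Sig (S i))%N.
(* min_i Sigma(S_i,A); for k >= 1 this is the minimum (the initial value
   maxSig is an upper bound of all terms, hence does not affect the result) *)
Definition minSig (k : nat) (A : seq nat) (S : 'I_k -> {set 'I_(size A)}) : nat :=
  (\big[minn/maxSig S]_(i < k) Sig (S i))%N.

Definition ratio {R : realType} (k : nat) (A : seq nat)
  (S : 'I_k -> {set 'I_(size A)}) : \bar R :=
  if (0 < minSig S)%N then ((maxSig S)%:R / (minSig S)%:R)%:E else +oo%E.

Definition OPT {R : realType} (k : nat) (A : seq nat) : \bar R :=
  ereal_inf ([set r | exists S : 'I_k -> {set 'I_(size A)},
                       pdisj S /\ r = ratio S])%classic.

Definition OPT_L {R : realType} (k : nat) (A : seq nat) : \bar R :=
  ereal_inf ([set r | exists S : 'I_k -> {set 'I_(size A)},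
    [/\ pdisj S, (exists i : 'I_k, exists x : 'I_(size A),
                     x \in S i /\ (x.+1 = size A)%N) & r = ratio S]])%classic.

(* A[l, r]: the sorted multiset of items a_i with l <= i <= r (1-based,
   indices outside [1,n] simply absent) *)
Definition subA (A : seq nat) (l r : int) : seq nat :=
  [seq nth 0%N A i.-1 | i <- iota 1 (size A) & (l <= i%:Z <= r)%R].

Definition cst_c {R : realType} (k : nat) (eps : R) : nat :=
  (1 + `|Num.ceil ((1 + eps^-1) * ln (2 * (k - 1)%:R / eps ^+ 2))|)%N.
Definition cst_C {R : realType} (k : nat) (eps : R) : nat :=
  ((cst_c k eps + 1) * (k - 1))%N.

Definition windowMin {R : realType} (k : nat) (A : seq nat) (C : nat) : \bar R :=
  ereal_inf ([set OPT_L k (subA A (j%:Z - C%:Z + 1) j%:Z)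
            | j in [set j : nat | (k <= j <= size A)%N]])%classic.

From Pilot Require Import Defs.
From mathcomp Require Import all_boot all_order all_algebra.
From mathcomp Require Import all_classical all_reals all_analysis.
From mathcomp Require Import ring lra zify.
Import Order.TTheory GRing.Theory Num.Theory.
Local Open Scope ring_scope.
Set Implicit Arguments. Unset Strict Implicit.

(* A window of A embeds into A, which gives OPT(A) <= OPT_L(window).
   Conversely, let S be a k-tuple with ratio M/m and let j-1 be the largest
   index it uses.  If k consecutive items satisfy a_(i+k-1) < (1+eps) a_i, the
   k singletons a_i, ..., a_(i+k-1) form a window tuple of ratio < 1+eps.
   Otherwise the items grow by a factor 1+eps every k-1 steps, and the choice
   of c makes the total mass of the items below index j-C at most
   eps/(1+eps) a_(j-k).  If a_(j-k) <= m, dropping these items from S shrinks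
   every part by at most a factor 1+eps and leaves a tuple inside the window
   ending at j; if a_(j-k) > m, the k singletons a_(j-k), ..., a_(j-1) already
   have ratio at most M/m. *)

Lemma nth_leq_sorted (A : seq nat) i i' : sorted leq A ->
  (i <= i')%N -> (i' < size A)%N -> (nth 0 A i <= nth 0 A i')%N.
Proof.
move=> Asorted ii' i'A; apply: (sorted_leq_nth leq_trans leqnn 0 Asorted) => //.
by rewrite inE (leq_ltn_trans ii').
Qed.

Section Sums.
Variable A : seq nat.
Implicit Types X Y : {set 'I_(size A)}.

Lemma nth_le_Sig X x : x \in X -> (nth 0 A x <= Sig X)%N.
Proof. by move=> xX; rewrite /Sig (bigD1 x) //= leq_addr. Qed.

Lemma Sig_subset X Y : X \subset Y -> (Sig X <= Sig Y)%N.
Proof.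
move=> /fintype.subsetP XY; rewrite /Sig big_mkcond [leqRHS]big_mkcond.
by apply: leq_sum => x _; case: ifP => // /XY ->.
Qed.

Lemma Sig_truncate X lo : (lo <= size A)%N ->
  (Sig X <= Sig (X :&: [set x : 'I_(size A) | lo <= x])
            + \sum_(0 <= x < lo) nth 0 A x)%N.
Proof.
move=> lo_le; rewrite /Sig (bigID (fun x : 'I_(size A) => lo <= x)%N) /=.
rewrite (eq_bigl (fun x : 'I_(size A) => x \in X :&: [set x : 'I_(size A) | lo <= x]%N))
  => [|x]; last by rewrite !inE.
rewrite leq_add2l big_mkord (big_ord_widen (size A)) //.
rewrite big_mkcond [leqRHS]big_mkcond; apply: leq_sum => x _.
by case: (x \in X); rewrite //= -ltnNge; case: ifP.
Qed.

End Sums.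

Section Ratio.
Variables (R : realType) (k : nat) (A : seq nat).
Implicit Types S : 'I_k -> {set 'I_(size A)}.

Lemma Sig_le_maxSig S i : (Sig (S i) <= maxSig S)%N.
Proof. exact: leq_bigmax. Qed.

Lemma minSig_le_Sig S i : (minSig S <= Sig (S i))%N.
Proof. by rewrite /minSig -minEnat -leEnat bigmin_le. Qed.

Lemma ler_minSig S (L : R) : (0 < k)%N ->
  (forall i, L <= (Sig (S i))%:R) -> L <= (minSig S)%:R.
Proof.
move=> k_gt0 LS; apply: (big_ind (fun x : nat => L <= x%:R)) => // [|x y Lx Ly].
  by apply: le_trans (LS (Ordinal k_gt0)) _; rewrite ler_nat Sig_le_maxSig.
by rewrite /minn; case: ifP.
Qed.

Lemma maxSig_ler S (U : R) : 0 <= U ->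
  (forall i, (Sig (S i))%:R <= U) -> (maxSig S)%:R <= U.
Proof.
move=> U_ge0 SU; apply: (big_ind (fun x : nat => x%:R <= U)) => // x y xU yU.
by rewrite /maxn; case: ifP.
Qed.

Lemma ratio_le_div S (L U : R) : (0 < k)%N -> 0 < L ->
  (forall i, L <= (Sig (S i))%:R) -> (forall i, (Sig (S i))%:R <= U) ->
  (Defs.ratio S <= (U / L)%:E :> \bar R)%E.
Proof.
move=> k_gt0 L_gt0 LS SU.
have Lm := ler_minSig k_gt0 LS.
have m_gt0 : (0 < minSig S)%N by rewrite -(ltr0n R); exact: lt_le_trans Lm.
have U_ge0 : 0 <= U by apply: le_trans (SU (Ordinal k_gt0)); rewrite ler0n.
rewrite /Defs.ratio m_gt0 lee_fin ler_pdivrMr ?ltr0n // mulrAC ler_pdivlMr //.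
by apply: ler_pM => //; [exact: ltW | exact: maxSig_ler].
Qed.

End Ratio.

Lemma Sig_gt0_mem A (X : {set 'I_(size A)}) : (0 < Sig X)%N -> exists x, x \in X.
Proof.
rewrite lt0n sum_nat_eq0 negb_forall => /existsP[x].
by rewrite negb_imply => /andP[xX _]; exists x.
Qed.

Lemma eq_ratio (R : realType) k (A B : seq nat) (S : 'I_k -> {set 'I_(size A)})
    (S' : 'I_k -> {set 'I_(size B)}) :
  (forall i, Sig (S i) = Sig (S' i)) -> Defs.ratio S = Defs.ratio S' :> \bar R.
Proof.
move=> SS'; have eM : maxSig S = maxSig S' by apply: eq_bigr.
have em : minSig S = minSig S' by rewrite /minSig eM; apply: eq_bigr.
by rewrite /Defs.ratio eM em.
Qed.

Lemma OPT_le_OPT_L (R : realType) k A : (@OPT R k A <= OPT_L k A)%E.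
Proof.
by apply/ereal_infP => _ [S [Sdisj _ ->]]; apply: ereal_inf_lbound; exists S.
Qed.

Section Embedding.
Variables (R : realType) (k : nat) (A B : seq nat).
Variable g : 'I_(size B) -> 'I_(size A).
Hypothesis g_inj : injective g.
Hypothesis g_nth : forall p : 'I_(size B), nth 0%N B p = nth 0%N A (g p).

Lemma Sig_imset (X : {set 'I_(size B)}) : Sig (g @: X) = Sig X.
Proof.
rewrite /Sig big_imset /=; last by move=> x y _ _ /g_inj.
by apply: eq_bigr => p _; rewrite g_nth.
Qed.

Lemma pdisj_imset (S : 'I_k -> {set 'I_(size B)}) :
  pdisj S -> pdisj (fun i => g @: S i).
Proof.
move=> Sdisj i i' /Sdisj; rewrite -!setI_eq0 -imsetI => [/eqP->|x y _ _ /g_inj //].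
by rewrite imset0.
Qed.

Lemma pdisj_preimset (S : 'I_k -> {set 'I_(size A)}) :
  pdisj S -> pdisj (fun i => g @^-1: S i).
Proof.
by move=> Sdisj i i' /Sdisj; rewrite -!setI_eq0 -preimsetI => /eqP->; rewrite preimset0.
Qed.

Lemma OPT_le_embed : (@OPT R k A <= OPT k B)%E.
Proof.
apply/ereal_infP => _ [S [Sdisj ->]]; apply: ereal_inf_lbound.
exists (fun i => g @: S i); split; first exact: pdisj_imset.
by apply: eq_ratio => i; rewrite Sig_imset.
Qed.

Lemma OPT_L_le_ratio (S : 'I_k -> {set 'I_(size A)}) :
  pdisj S -> (forall i, S i \subset codom g) ->
  (exists i (p : 'I_(size B)), g p \in S i /\ p.+1 = size B) ->
  (@OPT_L R k B <= Defs.ratio S)%E.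
Proof.
move=> Sdisj S_img [i [p [gpS p_last]]]; apply: ereal_inf_lbound.
exists (fun i => g @^-1: S i); split; first exact: pdisj_preimset.
  by exists i, p; rewrite inE.
apply: eq_ratio => i'; rewrite -Sig_imset; congr Sig.
apply/setP => x; apply/idP/imsetP => [xS | [p' p'S ->]]; last by rewrite inE in p'S.
have /codomP[p' x_eq] := fintype.subsetP (S_img i') x xS.
by exists p'; rewrite // inE -x_eq.
Qed.

End Embedding.

Section TakeDrop.
Variables (T : Type) (x0 : T) (s : seq T) (n d : nat).

Lemma take_drop_idx_subproof (p : 'I_(size (take n (drop d s)))) : (d + p < size s)%N.
Proof. by case: p => p /=; rewrite size_take_min size_drop; lia. Qed.

Definition take_drop_idx p : 'I_(size s) := Ordinal (take_drop_idx_subproof p).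

Lemma take_drop_idx_inj : injective take_drop_idx.
Proof. by move=> p q /(congr1 val) /addnI /val_inj. Qed.

Lemma nth_take_drop_idx (p : 'I_(size (take n (drop d s)))) :
  nth x0 (take n (drop d s)) p = nth x0 s (take_drop_idx p).
Proof.
have lt_p : (p < minn n (size s - d))%N by rewrite -size_drop -size_take_min.
by rewrite nth_take ?nth_drop //; lia.
Qed.

End TakeDrop.

Lemma subA_window (A : seq nat) (C j : nat) : (j <= size A)%N ->
  subA A (j%:Z - C%:Z + 1) j%:Z = take (j - (j - C)) (drop (j - C) A).
Proof.
(* [0%N] rather than the ring zero, which would give [A] a type that [lia]
   does not recognise as [seq nat]. *)
move=> jA; rewrite -(map_nth_iota 0%N); last lia.
have iota_split : iota 0 (size A) =
    iota 0 (j - C) ++ iota (j - C) (j - (j - C)) ++ iota j (size A - j).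
  rewrite -[in LHS](_ : j - C + (j - (j - C) + (size A - j)) = size A)%N; last lia.
  by rewrite !iotaD add0n (_ : j - C + (j - (j - C)) = j)%N //; lia.
rewrite /subA -[1%N]addn0 iotaDl filter_map -map_comp iota_split !filter_cat !map_cat.
rewrite (@eq_in_filter _ _ pred0 (iota 0 _)) => [|i]; last by rewrite mem_iota /=; lia.
rewrite (@eq_in_filter _ _ pred0 (iota j _)) => [|i]; last by rewrite mem_iota /=; lia.
rewrite (@eq_in_filter _ _ predT (iota (j - C) _)) => [|i]; last by rewrite mem_iota /=; lia.
by rewrite !filter_pred0 filter_predT cats0.
Qed.

Section Windows.
Variables (R : realType) (k : nat) (A : seq nat) (C : nat).

Lemma OPT_le_windowMin : (@OPT R k A <= windowMin k A C)%E.
Proof.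
apply/ereal_infP => _ [j /andP[_ jA] <-]; rewrite subA_window //.
apply: le_trans (OPT_le_OPT_L _ _ _).
by apply: OPT_le_embed; [exact: take_drop_idx_inj | exact: nth_take_drop_idx].
Qed.

Lemma windowMin_le_OPT_L j : (k <= j <= size A)%N ->
  (@windowMin R k A C <= OPT_L k (take (j - (j - C)) (drop (j - C) A)))%E.
Proof.
move=> /andP[kj jA]; rewrite -subA_window //.
by apply: ereal_inf_lbound; exists j => //; apply/andP.
Qed.

Lemma windowMin_le_ratio_within j (S : 'I_k -> {set 'I_(size A)}) :
  (k <= j <= size A)%N -> pdisj S ->
  (forall i (x : 'I_(size A)), x \in S i -> (j - C <= x < j)%N) ->
  (exists i (x : 'I_(size A)), x \in S i /\ x.+1 = j) ->
  (@windowMin R k A C <= Defs.ratio S)%E.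
Proof.
move=> /andP[kj jA] Sdisj S_win [i [x [xS x_last]]].
apply: le_trans (windowMin_le_OPT_L (j := j) _) _; first by rewrite kj.
set W := take _ (drop _ A).
have size_W : size W = (j - (j - C))%N by rewrite size_take_min size_drop; lia.
pose g := @take_drop_idx nat A (j - (j - C)) (j - C).
have win_idx (y : 'I_(size A)) : (j - C <= y < j)%N ->
    exists2 p : 'I_(size W), g p = y & (p : nat) = (y - (j - C))%N.
  move=> /andP[lo hi]; have p_lt : (y - (j - C) < size W)%N by rewrite size_W; lia.
  by exists (Ordinal p_lt) => //; apply: val_inj => /=; lia.
apply: OPT_L_le_ratio => //; [exact: take_drop_idx_inj | exact: nth_take_drop_idx | |].
  by move=> i'; apply/fintype.subsetP => y /S_win /win_idx [p <- _]; exact: codom_f.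
have [p gp p_eq] := win_idx x (S_win _ _ xS).
by exists i, p; move: gp; rewrite /g => ->; split => //; move: (S_win _ _ xS); lia.
Qed.

Lemma windowMin_le_singletons j : (0 < k)%N -> (k <= C)%N ->
  all (fun a => 0 < a)%N A -> sorted leq A -> (k <= j <= size A)%N ->
  (@windowMin R k A C <= ((nth 0%N A (j - 1))%:R / (nth 0%N A (j - k))%:R)%:E)%E.
Proof.
move=> k_gt0 kC Apos Asorted /andP[kj jA].
have idx_lt (i : 'I_k) : (j - 1 - i < size A)%N by have := ltn_ord i; lia.
pose S (i : 'I_k) := [set Ordinal (idx_lt i)].
apply: le_trans (windowMin_le_ratio_within (j := j) (S := S) _ _ _ _) _.
- by rewrite kj.
- move=> i i' ii'; rewrite disjoints1 inE; apply: contra ii' => /eqP /(congr1 val) /=.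
  by have := ltn_ord i; have := ltn_ord i'; move=> *; apply/eqP/val_inj => /=; lia.
- by move=> i x; rewrite inE => /eqP -> /=; have := ltn_ord i; lia.
- exists (Ordinal k_gt0), (Ordinal (idx_lt (Ordinal k_gt0))).
  by rewrite inE /=; split => //; lia.
apply: ratio_le_div => // [|i|i]; rewrite /Sig ?big_set1 ?ltr0n ?ler_nat /=.
- have jkA : (j - k < size A)%N by lia.
  exact: (allP Apos) _ (mem_nth 0%N jkA).
- by apply: nth_leq_sorted; have := ltn_ord i; lia.
- by apply: nth_leq_sorted; have := ltn_ord i; lia.
Qed.

Lemma windowMin_le_truncated j (S : 'I_k -> {set 'I_(size A)}) (L U : R) :
  (0 < k)%N -> (k <= C)%N -> (k <= j <= size A)%N -> pdisj S ->
  (forall i (x : 'I_(size A)), x \in S i -> (x < j)%N) ->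
  (exists i (x : 'I_(size A)), x \in S i /\ x.+1 = j) -> 0 < L ->
  (forall i, L + (\sum_(0 <= x < j - C) nth 0 A x)%:R <= (Sig (S i))%:R) ->
  (forall i, (Sig (S i))%:R <= U) ->
  (@windowMin R k A C <= (U / L)%:E)%E.
Proof.
move=> k_gt0 kC /andP[kj jA] Sdisj S_lt [i [x [xS x_last]]] L_gt0 LS SU.
pose S' i := S i :&: [set y : 'I_(size A) | j - C <= y]%N.
apply: le_trans (windowMin_le_ratio_within (j := j) (S := S') _ _ _ _) _.
- by rewrite kj.
- by move=> i1 i2 /Sdisj; apply: disjointW; apply: subsetIl.
- by move=> i' y; rewrite !inE => /andP[/S_lt -> ->].
- by exists i, x; rewrite !inE xS /=; split => //; lia.
apply: ratio_le_div => // i'.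
  have := Sig_truncate (S i') (ltac:(lia) : j - C <= size A)%N.
  rewrite -(ler_nat R) natrD; have := LS i'; lra.
by apply: le_trans (SU i'); rewrite ler_nat Sig_subset // subsetIl.
Qed.

End Windows.

Definition geometric_gaps (R : numDomainType) (q : nat) (eps : R) (A : seq nat) :=
  forall i, (i + q < size A)%N ->
  (1 + eps) * (nth 0%N A i)%:R <= (nth 0%N A (i + q))%:R.

Section GeometricGaps.
Variables (R : realFieldType) (q : nat) (eps : R) (A : seq nat).
Hypotheses (eps_gt0 : 0 < eps) (gaps : geometric_gaps q eps A).

Lemma nth_geometric i t : (i + t * q < size A)%N ->
  (1 + eps) ^+ t * (nth 0%N A i)%:R <= (nth 0%N A (i + t * q))%:R.
Proof.
elim: t => [|t IH] lt_size; first by rewrite expr0 mul1r mul0n addn0.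
move: lt_size; rewrite exprS -mulrA mulSnr addnA => lt_size.
apply: le_trans (gaps lt_size); apply: ler_wpM2l; first by rewrite addr_ge0 // ltW.
by apply: IH; lia.
Qed.

Lemma prefix_sum_le i : sorted leq A -> (0 < q)%N -> (i < size A)%N ->
  eps * (\sum_(0 <= x < i.+1) nth 0 A x)%:R <= q%:R * (1 + eps) * (nth 0%N A i)%:R.
Proof.
move=> Asorted q_gt0; elim/ltn_ind: i => i IH iA.
have tail_le m : (\sum_(m <= x < i.+1) nth 0 A x <= (i.+1 - m) * nth 0 A i)%N.
  rewrite -sum_nat_const_nat big_nat_cond [leqRHS]big_nat_cond.
  by apply: leq_sum => x /andP[/andP[_ xi] _]; apply: nth_leq_sorted.
have a_ge0 : 0 <= (nth 0%N A i)%:R :> R by [].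
have q_ge0 : 0 <= q%:R :> R by [].
case: (ltnP i q) => [iq | qi].
  have sum_le : (\sum_(0 <= x < i.+1) nth 0 A x <= q * nth 0 A i)%N.
    by apply: leq_trans (tail_le 0%N) _; rewrite subn0 leq_mul2r iq orbT.
  move: sum_le eps_gt0; rewrite -(ler_nat R) natrM; nra.
have [i' i_eq] : exists i', i = (i' + q)%N by exists (i - q)%N; lia.
rewrite (big_cat_nat (n := i'.+1)) /= ?natrD; [|lia|lia].
have head_le := IH i' ltac:(lia) ltac:(lia).
have gap : (1 + eps) * (nth 0%N A i')%:R <= (nth 0%N A i)%:R.
  by rewrite i_eq; apply: gaps; lia.
have := tail_le i'.+1; rewrite (_ : i.+1 - i'.+1 = q)%N; last lia.
move: eps_gt0; rewrite -(ler_nat R) natrM; nra.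
Qed.

End GeometricGaps.

Lemma windowMin_le_1Deps (R : realType) k A C (eps : R) :
  (0 < k)%N -> (k <= C)%N -> all (fun a => 0 < a)%N A -> sorted leq A ->
  ~ geometric_gaps (k - 1) eps A -> (windowMin k A C <= (1 + eps)%:E)%E.
Proof.
move=> k_gt0 kC Apos Asorted no_gaps.
have [i [iq gap]] : exists i, (i + (k - 1) < size A)%N /\
    (nth 0%N A (i + (k - 1)))%:R < (1 + eps) * (nth 0%N A i)%:R.
  apply: contra_notP no_gaps => no_gap i iq; rewrite leNgt; apply/negP => lt.
  by apply: no_gap; exists i.
apply: le_trans (@windowMin_le_singletons R k A _ (i + k) k_gt0 kC Apos Asorted _) _.
  by apply/andP; split; lia.
have iA : (i < size A)%N by lia.
have a_gt0 : (0 < nth 0 A i)%N := (allP Apos) _ (mem_nth 0%N iA).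
rewrite addnK -addnBA; last lia.
by rewrite lee_fin ler_pdivrMr ?ltr0n // ltW.
Qed.

Lemma ln1Dx_ge (R : realType) (x : R) : -1 < x -> x / (1 + x) <= ln (1 + x).
Proof.
move=> x_gtN1; have x1_gt0 : 0 < 1 + x by lra.
have y_gtN1 : -1 < - (x / (1 + x)) by rewrite ltrNl opprK ltr_pdivrMr // mul1r; lra.
have := le_ln1Dx y_gtN1.
have -> : 1 - x / (1 + x) = (1 + x)^-1 by field; lra.
by rewrite lnV ?posrE //; lra.
Qed.

Lemma expr_ceil_ln_ge (R : realType) (eps y : R) : 0 < eps -> 1 <= y ->
  y <= (1 + eps) ^+ `|Num.ceil ((1 + eps^-1) * ln y)|%N.
Proof.
move=> eps_gt0 y_ge1; set x := (1 + eps^-1) * ln y; set N := `|Num.ceil x|%N.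
have lny_ge0 : 0 <= ln y by exact: ln_ge0.
have x_ge0 : 0 <= x by rewrite mulr_ge0 // addr_ge0 // invr_ge0 ltW.
have x_le_N : x <= N%:R by rewrite natr_absz ger0_norm ?ceil_ge // ceil_ge0; lra.
have ln1D_ge : eps / (1 + eps) <= ln (1 + eps) by apply: ln1Dx_ge; lra.
have lny_le : ln y <= x * ln (1 + eps).
  rewrite /x mulrAC ler_peMl // (_ : 1 + eps^-1 = (1 + eps) / eps); last by field; lra.
  apply: le_trans (ler_wpM2l _ ln1D_ge); last by rewrite divr_ge0 //; lra.
  by rewrite (_ : _ * (eps / _) = 1) //; field; lra.
rewrite -ler_ln ?posrE ?exprn_gt0 //; try lra.
rewrite lnXn; last lra.
by apply: le_trans lny_le _; rewrite -mulr_natl ler_wpM2r // ln_ge0 //; lra.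
Qed.

Lemma cst_c_bound (R : realType) k (eps : R) : (2 <= k)%N -> 0 < eps < 1 ->
  (k - 1)%:R * (1 + eps) ^+ 2 <= eps ^+ 2 * (1 + eps) ^+ cst_c k eps.
Proof.
move=> k_ge2 /andP[eps_gt0 eps_lt1].
have eps2_gt0 : 0 < eps ^+ 2 by rewrite exprn_gt0.
have k1_ge1 : 1 <= (k - 1)%:R :> R by rewrite ler1n; lia.
set y := 2 * (k - 1)%:R / eps ^+ 2.
have y_ge1 : 1 <= y by rewrite /y ler_pdivlMr // mul1r expr2; nra.
have := expr_ceil_ln_ge eps_gt0 y_ge1; rewrite /cst_c -/y exprD expr1.
set P := (1 + eps) ^+ _ => y_le_P.
have k_le_P : 2 * (k - 1)%:R <= eps ^+ 2 * P.
  have -> : 2 * (k - 1)%:R = eps ^+ 2 * y by rewrite /y; field; lra.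
  by rewrite ler_wpM2l // ltW.
rewrite expr2 mulrA; apply: le_trans (_ : 2 * (k - 1)%:R * (1 + eps) <= _).
  by apply: ler_wpM2r; [lra | nra].
by rewrite [in leRHS]mulrCA [in leLHS]mulrC; apply: ler_wpM2l => //; lra.
Qed.

Lemma k_le_cst_C (R : realType) k (eps : R) : (2 <= k)%N -> (k <= cst_C k eps)%N.
Proof. by rewrite /cst_C /cst_c; set N := `|_|%N; nia. Qed.

Lemma prefix_mass_le (R : realType) k (eps : R) A j :
  (2 <= k)%N -> 0 < eps < 1 -> sorted leq A -> geometric_gaps (k - 1) eps A ->
  (j <= size A)%N ->
  (1 + eps) * (\sum_(0 <= x < j - cst_C k eps) nth 0 A x)%:R <=
  eps * (nth 0%N A (j - k))%:R.
Proof.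
move=> k_ge2 eps01 Asorted gaps jA; have /andP[eps_gt0 eps_lt1] := eps01.
set c := cst_c k eps; set s := (\sum_(0 <= x < _) _)%:R.
case lo_eq : (j - cst_C k eps)%N => [|lo].
  by rewrite /s lo_eq big_geq // mulr0 mulr_ge0 //; lra.
have idx : (lo + c * (k - 1) = j - k)%N.
  by move: lo_eq; rewrite /cst_C -/c mulnDl mul1n; set w := (c * (k - 1))%N; lia.
have sum_le := prefix_sum_le eps_gt0 gaps Asorted (ltac:(lia) : 0 < k - 1)%N
  (ltac:(lia) : lo < size A)%N.
have geo := nth_geometric eps_gt0 gaps (ltac:(lia) : lo + c * (k - 1) < size A)%N.
have cP := cst_c_bound k_ge2 eps01.
move: sum_le geo cP; rewrite idx -/c -[in (\sum_(0 <= x < lo.+1) _)%N]lo_eq -/s.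
set q := (k - 1)%:R; set a := (nth 0%N A lo)%:R; set b := (nth 0%N A (j - k))%:R.
set P := (1 + eps) ^+ c => sum_le geo cP.
have a_ge0 : 0 <= a by [].
have eps1_ge0 : 0 <= 1 + eps by lra.
have eps2_ge0 : 0 <= eps ^+ 2 by rewrite exprn_ge0 // ltW.
have := ler_wpM2l eps1_ge0 sum_le.
have := ler_wpM2r a_ge0 cP.
have := ler_wpM2l eps2_ge0 geo.
rewrite -(ler_pM2l eps_gt0); nra.
Qed.

Lemma last_index n (U : {set 'I_n}) x0 :
  x0 \in U -> exists2 x, x \in U & forall y, y \in U -> (y <= x)%N.
Proof.
move=> x0U; have [|x xU x_max] := eq_bigmax_cond val (_ : 0 < #|U|)%N.
  by apply/card_gt0P; exists x0.
by exists x => // y yU; rewrite -x_max; exact: leq_bigmax_cond.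
Qed.

Lemma pdisj_card_le k A (S : 'I_k -> {set 'I_(size A)}) j :
  pdisj S -> (forall i, exists x, x \in S i) ->
  (forall i x, x \in S i -> (x < j)%N) -> (k <= j)%N.
Proof.
move=> Sdisj S_nz S_lt.
have pick_S i : {x | x \in S i} by apply/sigW.
pose f i := Ordinal (S_lt i _ (svalP (pick_S i))).
suff /leq_card : injective f by rewrite !card_ord.
move=> i i' /(congr1 val) /= /val_inj f_eq; apply/eqP; apply: contraT => /Sdisj.
by move/disjointFr => /(_ _ (svalP (pick_S i))); rewrite f_eq (svalP (pick_S i')).
Qed.

Lemma pdisj_last_index k A (S : 'I_k -> {set 'I_(size A)}) :
  (0 < k)%N -> pdisj S -> (forall i, exists x, x \in S i) ->
  exists j, [/\ (k <= j <= size A)%N,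
    forall i (x : 'I_(size A)), x \in S i -> (x < j)%N &
    exists i (x : 'I_(size A)), x \in S i /\ x.+1 = j].
Proof.
move=> k_gt0 Sdisj S_nz; have [x0 x0S] := S_nz (Ordinal k_gt0).
have [|xm xmU xm_max] := @last_index _ (\bigcup_(i < k) S i) x0.
  by apply/bigcupP; exists (Ordinal k_gt0).
have [i1 _ xm_S] := bigcupP xmU.
have S_lt i x : x \in S i -> (x < xm.+1)%N.
  by move=> xS; rewrite ltnS xm_max //; apply/bigcupP; exists i.
exists xm.+1; split => //; last by exists i1, xm.
by rewrite (pdisj_card_le Sdisj S_nz S_lt) ltn_ord.
Qed.

Lemma windowMin_le_ratio (R : realType) k A (eps : R) (S : 'I_k -> {set 'I_(size A)}) :
  (2 <= k)%N -> all (fun a => 0 < a)%N A -> sorted leq A -> 0 < eps < 1 ->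
  pdisj S -> (windowMin k A (cst_C k eps) <= (1 + eps)%:E * Defs.ratio S)%E.
Proof.
move=> k_ge2 Apos Asorted eps01 Sdisj; have /andP[eps_gt0 eps_lt1] := eps01.
have k_gt0 : (0 < k)%N by lia.
have kC := k_le_cst_C eps k_ge2.
case m_gt0 : (0 < minSig S)%N; last first.
  by rewrite /Defs.ratio m_gt0 mulry gtr0_sg ?mul1e ?leey //; lra.
set m := minSig S in m_gt0 *; set M := maxSig S.
have S_nz i : exists x, x \in S i.
  by apply: Sig_gt0_mem; apply: leq_trans m_gt0 (minSig_le_Sig S i).
have [j [kjA S_lt [i1 [xm [xm_S xm_last]]]]] := pdisj_last_index k_gt0 Sdisj S_nz.
have /andP[_ jA] := kjA.
have m_pos : 0 < m%:R :> R by rewrite ltr0n.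
have ratio_ge1 : 1 <= M%:R / m%:R :> R.
  by rewrite ler_pdivlMr // mul1r ler_nat (leq_trans (minSig_le_Sig S i1)) ?Sig_le_maxSig.
rewrite /Defs.ratio -/m -/M m_gt0 -EFinM.
have [gaps | no_gaps] := pselect (geometric_gaps (k - 1) eps A); last first.
  apply: le_trans (windowMin_le_1Deps k_gt0 kC Apos Asorted no_gaps) _.
  by rewrite lee_fin ler_peMr //; lra.
case: (leqP (nth 0 A (j - k)) m) => [ajk_le | ajk_gt].
  apply: le_trans (windowMin_le_truncated (L := m%:R / (1 + eps)) (U := M%:R)
    k_gt0 kC kjA Sdisj S_lt _ _ _ _) _.
  - by exists i1, xm.
  - by rewrite divr_gt0 //; lra.
  - move=> i; have := prefix_mass_le k_ge2 eps01 Asorted gaps jA.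
    have : m%:R <= (Sig (S i))%:R :> R by rewrite ler_nat minSig_le_Sig.
    have : (nth 0 A (j - k))%:R <= m%:R :> R by rewrite ler_nat.
    have : m%:R / (1 + eps) * (1 + eps) = m%:R by field; lra.
    nra.
  - by move=> i; rewrite ler_nat Sig_le_maxSig.
  rewrite lee_fin (_ : M%:R / (m%:R / (1 + eps)) = (1 + eps) * (M%:R / m%:R)) //.
  by field; rewrite gt_eqF //; lra.
apply: le_trans (@windowMin_le_singletons R k A _ j k_gt0 kC Apos Asorted kjA) _.
rewrite lee_fin; apply: le_trans (_ : M%:R / m%:R <= _); last by rewrite ler_peMl //; lra.
have a_le_M : (nth 0 A (j - 1) <= M)%N.
  by rewrite -xm_last subn1; apply: leq_trans (nth_le_Sig xm_S) (Sig_le_maxSig S i1).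
rewrite ler_pdivrMr ?ltr0n; last exact: leq_ltn_trans (leq0n m) ajk_gt.
by rewrite mulrAC ler_pdivlMr //; apply: ler_pM; rewrite ?ler_nat //; exact: ltnW.
Qed.

Theorem lemma26 (R : realType) (k : nat) (A : seq nat) (eps : R) :
  (2 <= k)%N -> all (fun a => 0 < a)%N A -> sorted leq A ->
  0 < eps < 1 ->
  (@OPT R k A <= @windowMin R k A (cst_C k eps) /\
   @windowMin R k A (cst_C k eps) <= (1 + eps)%:E * @OPT R k A)%E.
Proof.
move=> k_ge2 Apos Asorted eps01; have /andP[eps_gt0 _] := eps01.
split; first exact: OPT_le_windowMin.
rewrite -lee_pdivrMl; last lra.
apply/ereal_infP => _ [S [Sdisj ->]]; rewrite lee_pdivrMl; last lra.
exact: windowMin_le_ratio.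
Qed.
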